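(* For every admissible $i$, $K^i\subseteq Z^i$, where $Z^i=\{V_\bullet\in\mathrm{Fl}(1^n,s-1)\mid V_{i-1}\subseteq\mathrm{im}(x)\subseteq V_n\subseteq x^{-1}V_{i-1}\}$.
   Context: Fix integers $n\ge 2$ and $s\ge n-1$, let $N=n+s-1$, and let $e_1,\dots,e_N$ be the standard basis of $\mathbb{C}^N$. Let $x:\mathbb{C}^N\to\mathbb{C}^N$ be the linear map with $xe_m=e_{m-(n-1)}$ for $n\le m\le 2n-2$ and $xe_m=0$ otherwise; thus $\mathrm{im}(x)=\mathrm{span}(e_1,\dots,e_{n-1})$. $x^{-1}V$ denotes the preimage of a subspace $V$ under $x$. $\mathrm{Fl}(1^n,s-1)$ is the variety of partial flags $V_\bullet=(0=V_0\subset V_1\subset\cdots\subset V_n\subset\mathbb{C}^N)$ with $\dim V_j=j$. The $\Delta$-Springer fiber is $Y=\{V_\bullet\in\mathrm{Fl}(1^n,s-1)\mid \mathrm{im}(x)\subseteq V_n,\ xV_j\subseteq V_j \text{ for all } j\}$. For distinct $w_1,\dots,w_n\in\{1,\dots,N\}$, the Schubert cell $X_w^\circ$ is the set of flags with $\dim(V_j\cap\mathrm{span}(e_1,\dots,e_m))=\#\{l\le j: w_l\le m\}$ for all $j,m$. An index $i$ is admissible if $1\le i\le n$ when $s>n-1$, and $2\le i\le n$ when $s=n-1$. For admissible $i$ put $w^{(i)}=(n-1,n-2,\dots,n-i+1,\,N,\,n-i,\dots,1)$ and let $K^i$ be the closure in $Y$ of $X^\circ_{w^{(i)}}\cap Y$.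 *)

From HB Require Import structures.
From mathcomp Require Import all_boot all_order all_algebra.
From mathcomp Require Import reals.
From mathcomp Require Import complex.
Set Implicit Arguments. Unset Strict Implicit. Unset Printing Implicit Defensive.
Import Order.TTheory GRing.Theory Num.Theory.
Local Open Scope ring_scope.

(* Vectors of C^N are row vectors 'rV_N; a subspace is the row space of a
   matrix (mxalgebra, scope %MS).  A partial flag V_1 < ... < V_n in C^N with
   dim V_j = j is represented by a row-free matrix A : 'M_(n, N): V_j is the
   span of the first j rows of A. *)

Section Delta.
Variable (C : fieldType) (n N : nat).

Definition flagV (A : 'M[C]_(n, N)) (j : nat) : 'M[C]_(n, N) :=
  \matrix_(k < n, b < N) (if (k < j)%N then A k b else 0).

(* The nilpotent map x acting on row vectors v |-> v *m xmat.
   0-indexed: e_a |-> e_(a - (n-1)) for n-1 <= a <= 2n-3, and 0 otherwise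
   (this is x e_m = e_(m-(n-1)) for n <= m <= 2n-2, 1-indexed). *)
Definition xmat : 'M[C]_N :=
  \matrix_(a < N, b < N)
    (((n.-1 <= a)%N && (a < (n.-1).*2)%N && (b + n.-1 == a)%N)%:R).

Definition coordSpan (m : nat) : 'M[C]_N :=
  \matrix_(a < N, b < N) (((a == b) && (a < m)%N)%:R).

Definition inY (A : 'M[C]_(n, N)) : Prop :=
  row_free A /\ (xmat <= A)%MS /\
  forall j : nat, (j <= n)%N -> (flagV A j *m xmat <= flagV A j)%MS.

(* Schubert cell X_w^o, for w given as a 1-indexed function l |-> w_l *)
Definition inSchubertCell (w : nat -> nat) (A : 'M[C]_(n, N)) : Prop :=
  row_free A /\
  forall j m : nat, (j <= n)%N -> (m <= N)%N ->
    \rank (flagV A j :&: coordSpan m)%MS =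
    (\sum_(1 <= l < j.+1) ((w l <= m)%N : nat))%N.

(* Z^i = { V_(i-1) <= im x <= V_n <= x^{-1} V_(i-1) }.
   V_n <= x^{-1} W is, by definition of the preimage, x V_n <= W. *)
Definition inZ (i : nat) (A : 'M[C]_(n, N)) : Prop :=
  row_free A /\
  (flagV A i.-1 <= xmat)%MS /\ (xmat <= A)%MS /\ (A *m xmat <= flagV A i.-1)%MS.

End Delta.

(* w^(i) = (n-1, n-2, ..., n-i+1, N, n-i, ..., 1), as l |-> w_l, 1 <= l <= n *)
Definition wperm (n N i : nat) (l : nat) : nat :=
  (if l < i then n - l else if l == i then N else n - l + 1)%N.

(* Closure of a set S of flags (given by representatives, S invariant under
   change of representative) in the classical topology of Fl(1^n, s-1):
   the flag variety is the quotient of the open set of row-free matrices by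
   the (lower triangular) change-of-basis group; the quotient map is open,
   so a flag is in the closure of S iff matrices representing flags of S
   come arbitrarily close (entrywise) to a representative of it. *)
Definition in_closure (R : realType) (n N : nat)
    (S : 'M[R[i]]_(n, N) -> Prop) (A : 'M[R[i]]_(n, N)) : Prop :=
  row_free A /\
  forall eps : R[i], 0 < eps ->
    exists B : 'M[R[i]]_(n, N), S B /\
      forall (a : 'I_n) (b : 'I_N), `|A a b - B a b| < eps.

(* K^i : closure in Y of X_(w^(i))^o \cap Y  (= Y \cap ambient closure). *)
Definition inK (R : realType) (n s i : nat) (A : 'M[R[i]]_(n, (n + s).-1)) : Prop :=
  inY A /\
  in_closure (fun B => inSchubertCell (wperm n (n + s).-1 i) B /\ inY B) A.

From HB Require Import structures.
From mathcomp Require Import all_boot all_order all_algebra.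
From mathcomp Require Import reals complex.
From mathcomp Require Import lra zify.
Import Order.TTheory GRing.Theory Num.Theory.
Local Open Scope ring_scope.

(* On the Schubert cell X_(w^(i)) ∩ Y both conditions defining Z^i hold.  The
   rank conditions of the cell give V_(i-1) ⊆ span(e_1..e_(n-1)) = im x and
   V_i ⊄ im x; since im x is a hyperplane of V_n, V_n = im x + V_i, so x^2 = 0
   and x V_i ⊆ V_i give x V_n ⊆ V_i ∩ span(e_1..e_(N-1)), which the rank
   conditions identify with V_(i-1).  Both conditions pass to limits: the first
   says that some coordinates vanish, and for the second, writing
   x V_n = c V_(i-1), the coefficient matrix c stays bounded near a flag
   represented by a row-free matrix. *)

Set Implicit Arguments. Unset Strict Implicit. Unset Printing Implicit Defensive.

Lemma submx_rank_leq (C : fieldType) m1 m2 n (A : 'M[C]_(m1, n)) (B : 'M_(m2, n)) :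
  (A <= B)%MS -> (\rank B <= \rank A)%N -> (B <= A)%MS.
Proof.
move=> sAB leBA; rewrite -(mxrank_leqif_sup sAB).2.
by rewrite eqn_leq leBA mxrankS.
Qed.

Section Flags.
Variables (C : fieldType) (n N : nat).
Implicit Type A : 'M[C]_(n, N).

Lemma flagV_pid_mx A j : flagV A j = pid_mx j *m A.
Proof.
apply/matrixP => k b; rewrite !mxE (bigD1 k) //= big1 => [|l /negbTE neq_lk].
  by rewrite mxE eqxx /=; case: ifP; rewrite ?mul1r ?mul0r addr0.
by rewrite mxE; case: eqP => [eq_kl|]; rewrite ?mul0r //; move: neq_lk; rewrite -(inj_eq val_inj) /= eq_kl eqxx.
Qed.

Lemma flagV_id A : flagV A n = A.
Proof. by apply/matrixP => k b; rewrite mxE ltn_ord. Qed.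

Lemma rank_flagV A j : row_free A -> (j <= n)%N -> \rank (flagV A j) = j.
Proof. by move=> freeA le_jn; rewrite flagV_pid_mx mxrankMfree // rank_pid_mx. Qed.

Lemma flagVS A j k : (j <= k)%N -> (flagV A j <= flagV A k)%MS.
Proof.
move=> le_jk; rewrite !flagV_pid_mx.
have ->: pid_mx j = (pid_mx j : 'M[C]_n) *m (pid_mx k : 'M[C]_n).
  by rewrite mul_pid_mx (minn_idPl le_jk) pid_mx_minv.
by rewrite -mulmxA submxMl.
Qed.

End Flags.

Section CoordinateSpans.
Variables (C : fieldType) (N : nat).

Lemma coordSpan_pid_mx m : coordSpan C N m = pid_mx m.
Proof. by apply/matrixP => a b; rewrite !mxE. Qed.

Lemma rank_coordSpan m : (m <= N)%N -> \rank (coordSpan C N m) = m.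
Proof. by move=> le_mN; rewrite coordSpan_pid_mx rank_pid_mx. Qed.

Lemma coordSpanS m m' : (m <= m')%N -> (coordSpan C N m <= coordSpan C N m')%MS.
Proof.
move=> le_mm; rewrite !coordSpan_pid_mx.
have ->: pid_mx m = (pid_mx m : 'M[C]_N) *m (pid_mx m' : 'M[C]_N).
  by rewrite mul_pid_mx (minn_idPl le_mm) pid_mx_minv.
exact: submxMl.
Qed.

Lemma submx_coordSpanP k m (M : 'M[C]_(k, N)) :
  reflect (forall a (b : 'I_N), (m <= b)%N -> M a b = 0)
          (M <= coordSpan C N m)%MS.
Proof.
have mulM_coord (D : 'M[C]_(k, N)) a b :
    (D *m coordSpan C N m) a b = if (b < m)%N then D a b else 0.
  rewrite !mxE (bigD1 b) //= big1 => [|l /negbTE neq_lb].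
    by rewrite mxE eqxx /=; case: ifP; rewrite ?mulr1 ?mulr0 addr0.
  by rewrite mxE neq_lb mulr0.
apply: (iffP idP) => [/submxP[D ->] a b le_mb | Mcol0].
  by rewrite mulM_coord ltnNge le_mb.
suff <-: M *m coordSpan C N m = M by exact: submxMl.
apply/matrixP => a b; rewrite mulM_coord; case: ltnP => // le_mb.
by rewrite Mcol0.
Qed.

End CoordinateSpans.

Section NilpotentX.
Variables (C : fieldType) (n N : nat).
Local Notation x := (xmat C n N).

Lemma xmat_sub_coordSpan : (x <= coordSpan C N n.-1)%MS.
Proof.
apply/submx_coordSpanP => a b le_nb; rewrite mxE.
by case: (boolP (_ && _)) => // /andP[/andP[_ lt_a] /eqP eq_a]; lia.
Qed.

Lemma coordSpan_sub_xmat : ((n.-1).*2 <= N)%N -> (coordSpan C N n.-1 <= x)%MS.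
Proof.
move=> le_2nN; apply/row_subP => b; case: (ltnP b n.-1) => [lt_bn | le_nb].
  have lt_shift : (b + n.-1 < N)%N by lia.
  suff ->: row b (coordSpan C N n.-1) = row (Ordinal lt_shift) x by exact: row_sub.
  apply/matrixP => z c; rewrite !mxE /= lt_bn andbT eqn_add2r eq_sym.
  by rewrite leq_addl /= (_ : b + n.-1 < _)%N //; lia.
rewrite (_ : row b _ = 0) ?sub0mx //; apply/matrixP => z c; rewrite !mxE.
by rewrite ltnNge le_nb andbF.
Qed.

Lemma rank_xmat : ((n.-1).*2 <= N)%N -> \rank x = n.-1.
Proof.
move=> le_2nN; rewrite -(rank_coordSpan C (_ : n.-1 <= N)%N); last by lia.
apply/eqmx_rank; rewrite xmat_sub_coordSpan coordSpan_sub_xmat //.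
Qed.

Lemma mulmx_xmatxmat : x *m x = 0.
Proof.
apply/matrixP => a b; rewrite !mxE big1 // => l _; rewrite !mxE.
case: (boolP (_ && (l + _ == _)%N)) => [/andP[/andP[_ lt_a] /eqP eq_a]|_];
  rewrite ?mul0r // mul1r.
by case: (boolP (_ && _)) => // /andP[/andP[le_nl _] _]; lia.
Qed.

End NilpotentX.

Lemma sum_wperm_leq n N i m j : (1 <= i)%N -> (n.-1 <= m < N)%N -> (j <= i)%N ->
  (\sum_(1 <= l < j.+1) (wperm n N i l <= m : nat))%N = minn j i.-1.
Proof.
move=> ge1_i le_nmN; elim: j => [|j IHj] lt_ji; first by rewrite big_geq // min0n.
rewrite big_nat_recr //= IHj ?(ltnW lt_ji) // /wperm.
case: ltnP => [lt_j1i | le_ij1].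
  have ->: (n - j.+1 <= m)%N by case/andP: le_nmN => le_nm _; lia.
  by rewrite addn1; lia.
have eq_j1i : j.+1 = i by lia.
rewrite eq_j1i eqxx.
have ->: (N <= m)%N = false by case/andP: le_nmN => _ lt_mN; apply/negbTE; rewrite -ltnNge.
by rewrite addn0; lia.
Qed.
Section SchubertCell.
Variables (C : fieldType) (n s i : nat).
Hypotheses (ge2_n : (2 <= n)%N) (le_ns : (n.-1 <= s)%N) (i_range : (1 <= i <= n)%N).
Local Notation N := (n + s).-1.
Local Notation x := (xmat C n N).
Variable B : 'M[C]_(n, N).
Hypotheses (cellB : inSchubertCell (wperm n N i) B) (YB : inY B).

Let freeB : row_free B := cellB.1.
Let le_2nN : ((n.-1).*2 <= N)%N. Proof. lia. Qed.

Lemma cell_rank_cap j m : (j <= i)%N -> (n.-1 <= m < N)%N ->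
  \rank (flagV B j :&: coordSpan C N m)%MS = minn j i.-1.
Proof.
by move=> le_ji le_nmN; rewrite cellB.2 ?sum_wperm_leq //; lia.
Qed.

Lemma cell_flagV_sub_coordSpan : (flagV B i.-1 <= coordSpan C N n.-1)%MS.
Proof.
apply: submx_trans (capmxSr _ (coordSpan C N n.-1)).
apply: submx_rank_leq (capmxSl _ _) _.
by rewrite cell_rank_cap ?rank_flagV //; lia.
Qed.

Lemma cell_flagV_not_sub_xmat : ~~ (flagV B i <= x)%MS.
Proof.
apply/negP => sVx.
have sV_cap : (flagV B i <= flagV B i :&: coordSpan C N N.-1)%MS.
  rewrite sub_capmx submx_refl (submx_trans sVx) //.
  by rewrite (submx_trans (xmat_sub_coordSpan _ _ _)) // coordSpanS //; lia.
by move: (mxrankS sV_cap); rewrite cell_rank_cap ?rank_flagV //; lia.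
Qed.

Lemma cell_sub_xmat_addsmx : (B <= x + flagV B i)%MS.
Proof.
have [_ [sxB _]] := YB.
apply: submx_rank_leq.
  by rewrite addsmx_sub sxB -{2}(flagV_id B) flagVS //; case/andP: i_range.
have lt_x_xV : (x < x + flagV B i)%MS.
  rewrite ltmxE addsmxSl /=; apply: contra cell_flagV_not_sub_xmat.
  exact: submx_trans (addsmxSr _ _).
by move: (rank_ltmx lt_x_xV); rewrite rank_xmat // (eqP freeB); lia.
Qed.

Lemma cell_mul_xmat_sub_flagV : (B *m x <= flagV B i.-1)%MS.
Proof.
have [_ [_ stableY]] := YB.
have sBx_Vi : (B *m x <= flagV B i)%MS.
  apply: submx_trans (submxMr x cell_sub_xmat_addsmx) _.
  by rewrite addsmxMr mulmx_xmatxmat addsmx_sub sub0mx stableY //; case/andP: i_range.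
have sVi1_cap : (flagV B i.-1 <= flagV B i :&: coordSpan C N N.-1)%MS.
  rewrite sub_capmx flagVS ?leq_pred // (submx_trans cell_flagV_sub_coordSpan) //.
  by rewrite coordSpanS //; lia.
apply: submx_trans (submx_rank_leq sVi1_cap _).
  rewrite sub_capmx sBx_Vi (submx_trans (submxMl _ _)) //.
  by rewrite (submx_trans (xmat_sub_coordSpan _ _ _)) // coordSpanS //; lia.
by rewrite cell_rank_cap ?rank_flagV //; lia.
Qed.

End SchubertCell.

Lemma le0_of_small (R : realType) (x a K : R) : 0 <= a -> 0 <= K ->
  (forall e, 0 < e -> e * a <= 1 -> x <= e * K) -> x <= 0.
Proof.
move=> a_ge0 K_ge0 le_xeK; rewrite leNgt; apply/negP => x_gt0.
set d := x * a + K + x.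
have d_gt0 : 0 < d by rewrite /d; have := mulr_ge0 (ltW x_gt0) a_ge0; lra.
have small_e : x / d * a <= 1 by rewrite mulrAC ler_pdivrMr // mul1r /d; lra.
have := le_xeK (x / d); rewrite divr_gt0 // => /(_ isT small_e).
rewrite mulrAC ler_pdivlMr // /d => le_x.
have := mulr_ge0 (mulr_ge0 (ltW x_gt0) (ltW x_gt0)) a_ge0; nra.
Qed.

Section MatrixNorm.
Variable R : realType.
Local Notation C := R[i].

Definition cnorm (z : C) : R := Normc.normc z.

Lemma normr_cnorm (z : C) : `|z| = (cnorm z)%:C%C.
Proof. by []. Qed.

Lemma cnorm_ge0 z : 0 <= cnorm z.
Proof. by rewrite -lecR -normr_cnorm normr_ge0. Qed.

Lemma cnorm_eq0 z : cnorm z = 0 -> z = 0.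
Proof. exact: Normc.eq0_normc. Qed.

Lemma cnorm_sum (I : finType) (F : I -> C) : cnorm (\sum_j F j) <= \sum_j cnorm (F j).
Proof.
apply: (big_ind2 (fun z r => cnorm z <= r)) => [|z1 z2 r1 r2 le1 le2 //|//].
  by rewrite /cnorm Normc.normc0.
by apply: le_trans (le_normcD _ _) _; exact: lerD.
Qed.

Definition mxnorm p q (M : 'M[C]_(p, q)) : R := \sum_a \sum_b cnorm (M a b).

Lemma mxnorm_ge0 p q (M : 'M[C]_(p, q)) : 0 <= mxnorm M.
Proof. by do 2![apply: sumr_ge0 => ? _]; exact: cnorm_ge0. Qed.

Lemma cnorm_le_mxnorm p q (M : 'M[C]_(p, q)) a b : cnorm (M a b) <= mxnorm M.
Proof.
rewrite /mxnorm (bigD1 a) //= (bigD1 b) //= -addrA lerDl.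
by apply: addr_ge0; do ?[apply: sumr_ge0 => ? _]; exact: cnorm_ge0.
Qed.

Lemma mxnorm_le0 p q (M : 'M[C]_(p, q)) : mxnorm M <= 0 -> M = 0.
Proof.
move=> le0M; apply/matrixP => a b; rewrite mxE; apply: cnorm_eq0.
by apply/le_anti; rewrite cnorm_ge0 (le_trans (cnorm_le_mxnorm M a b)).
Qed.

Lemma mxnormN p q (M : 'M[C]_(p, q)) : mxnorm (- M) = mxnorm M.
Proof. by do 2![apply: eq_bigr => ? _]; rewrite mxE /cnorm normcN. Qed.

Lemma mxnormD p q (M P : 'M[C]_(p, q)) : mxnorm (M + P) <= mxnorm M + mxnorm P.
Proof.
rewrite /mxnorm -big_split; apply: ler_sum => a _.
by rewrite -big_split; apply: ler_sum => b _; rewrite mxE; exact: le_normcD.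
Qed.

Lemma mxnormB p q (M P : 'M[C]_(p, q)) : mxnorm (M - P) <= mxnorm M + mxnorm P.
Proof. by rewrite -(mxnormN P) mxnormD. Qed.

Lemma mxnormM p q r (M : 'M[C]_(p, q)) (P : 'M[C]_(q, r)) :
  mxnorm (M *m P) <= mxnorm M * mxnorm P.
Proof.
rewrite /mxnorm mulr_suml; apply: ler_sum => a _.
apply: (@le_trans _ _ (\sum_b \sum_l cnorm (M a l) * cnorm (P l b))).
  apply: ler_sum => b _; rewrite mxE; apply: le_trans (cnorm_sum _) _.
  by apply: ler_sum => l _; rewrite /cnorm Normc.normcM.
rewrite exchange_big mulr_suml; apply: ler_sum => l _; rewrite -mulr_sumr.
apply: ler_wpM2l; first exact: cnorm_ge0.
rewrite (bigD1 l) //= lerDl; do 2![apply: sumr_ge0 => ? _]; exact: cnorm_ge0.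
Qed.

Lemma mxnorm_le_entries p q (M : 'M[C]_(p, q)) e :
  (forall a b, cnorm (M a b) <= e) -> mxnorm M <= (p * q)%:R * e.
Proof.
move=> le_e; apply: (@le_trans _ _ (\sum_(a < p) \sum_(b < q) e)).
  by do 2![apply: ler_sum => ? _]; exact: le_e.
by rewrite !sumr_const !card_ord -mulrnA mulr_natl mulnC.
Qed.

Lemma mxnorm_coef_le k n N (c : 'M[C]_(k, n)) (A B : 'M[C]_(n, N)) Rr :
  A *m Rr = 1%:M -> 2 * (mxnorm (B - A) * mxnorm Rr) <= 1 ->
  mxnorm c <= 2 * mxnorm (c *m B *m Rr).
Proof.
move=> ARr small_BA.
have c_eq : c = c *m B *m Rr - c *m ((B - A) *m Rr).
  by rewrite mulmxBl ARr mulmxBr mulmx1 mulmxA opprB addrCA subrr addr0.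
have := mxnormB (c *m B *m Rr) (c *m ((B - A) *m Rr)); rewrite -c_eq.
have := mxnormM c ((B - A) *m Rr); have := mxnormM (B - A) Rr.
have := mxnorm_ge0 c; have := mxnorm_ge0 ((B - A) *m Rr).
have := mxnorm_ge0 (B - A); have := mxnorm_ge0 Rr.
nra.
Qed.

End MatrixNorm.

Section Adherence.
Variable R : realType.
Local Notation C := R[i].

Definition adherent p q (S : 'M[C]_(p, q) -> Prop) (A : 'M[C]_(p, q)) : Prop :=
  forall e : R, 0 < e -> exists2 B, S B & mxnorm (A - B) < e.

Lemma in_closure_adherent n N (S : 'M[C]_(n, N) -> Prop) A :
  in_closure S A -> adherent S A.
Proof.
move=> [_ closeA] e e_gt0; set d := e / (n * N).+1%:R.
have [|B [SB closeAB]] := closeA d%:C%C; first by rewrite ltcR divr_gt0.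
exists B => //; apply: le_lt_trans (mxnorm_le_entries (e := d) _) _.
  by move=> a b; rewrite !mxE; apply/ltW; rewrite -ltcR -normr_cnorm.
rewrite /d mulrA ltr_pdivrMr ?ltr0n // -natr1 mulrDr mulr1 mulrC ltrDl.
exact: e_gt0.
Qed.

Lemma adherent_entry_eq0 p q (S : 'M[C]_(p, q) -> Prop) A a b :
  (forall B, S B -> B a b = 0) -> adherent S A -> A a b = 0.
Proof.
move=> SB0 adhA; apply: cnorm_eq0; apply/le_anti; rewrite cnorm_ge0 andbT leNgt.
apply/negP => /adhA[B /SB0 Bab0 closeAB].
by move: (le_lt_trans (cnorm_le_mxnorm _ a b) closeAB); rewrite !mxE Bab0 subr0 ltxx.
Qed.

Lemma adherent_flagV_sub_coordSpan n N (S : 'M[C]_(n, N) -> Prop) A j m :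
  (forall B, S B -> (flagV B j <= coordSpan C N m)%MS) -> adherent S A ->
  (flagV A j <= coordSpan C N m)%MS.
Proof.
move=> sS adhA; apply/submx_coordSpanP => a b le_mb; rewrite mxE.
case: ifP => // lt_aj; apply: adherent_entry_eq0 adhA => B /sS.
by move=> /submx_coordSpanP/(_ a b le_mb); rewrite mxE lt_aj.
Qed.

Lemma adherent_mul_submx n N k (S : 'M[C]_(n, N) -> Prop) (X : 'M[C]_N)
    (P : 'M[C]_(k, n)) A :
  row_free A -> (forall B, S B -> (B *m X <= P *m B)%MS) -> adherent S A ->
  (A *m X <= P *m A)%MS.
Proof.
move=> /row_freeP[Rr ARr] sS adhA; set Q := cokermx (P *m A).
rewrite submxE; apply/eqP/mxnorm_le0.
have nA_ge0 := mxnorm_ge0 A; have nX_ge0 := mxnorm_ge0 X.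
have nR_ge0 := mxnorm_ge0 Rr; have nQ_ge0 := mxnorm_ge0 Q.
set Kc := 2 * (mxnorm A + 1) * mxnorm X * mxnorm Rr.
have Kc_ge0 : 0 <= Kc by rewrite /Kc !mulr_ge0 //; lra.
apply: (le0_of_small (a := 2 * mxnorm Rr + 2) (K := (Kc + mxnorm X) * mxnorm Q)).
- lra.
- by rewrite mulr_ge0 //; lra.
move=> e e_gt0 e_small; have [B SB closeAB] := adhA e e_gt0.
set E := B - A; have nE_lt : mxnorm E < e by rewrite /E -opprB mxnormN.
have nE_ge0 := mxnorm_ge0 E.
have [D defBX] := submxP (sS B SB); set c := D *m P.
have cB : c *m B = B *m X by rewrite defBX mulmxA.
have cAQ : c *m A *m Q = 0 by rewrite -!mulmxA (mulmxA P) mulmx_coker mulmx0.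
(* [cokermx (P *m A)] kills [c *m A], and what is left is O(mxnorm E)
   because [c] stays bounded. *)
have AXQ : A *m X *m Q = (c *m E - E *m X) *m Q.
  have ->: A *m X = c *m A + (c *m E - E *m X).
    rewrite addrA -mulmxDr (_ : A + E = B) ?cB; last by rewrite /E addrC subrK.
    by rewrite /E mulmxBl opprB addrCA subrr addr0.
  by rewrite mulmxDl cAQ add0r.
have nc_le : mxnorm c <= Kc.
  apply: le_trans (mxnorm_coef_le c ARr _) _.
    by rewrite -/E; have := mulr_ge0 nE_ge0 nR_ge0; nra.
  rewrite cB /Kc -!mulrA ler_pM2l // mulrA.
  apply: le_trans (mxnormM _ _) _; rewrite ler_wpM2r //.
  apply: le_trans (mxnormM _ _) _; rewrite ler_wpM2r //.
  rewrite (_ : B = A + E); last by rewrite /E addrC subrK.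
  by apply: le_trans (mxnormD _ _) _; rewrite lerD2l; nra.
rewrite AXQ; apply: le_trans (mxnormM _ _) _; rewrite mulrA ler_wpM2r //.
apply: le_trans (mxnormB _ _) _.
have := mxnormM c E; have := mxnormM E X; have := mxnorm_ge0 c; nra.
Qed.

End Adherence.

Theorem proposition3p5 (R : realType) (n s i : nat)
  (hn : (2 <= n)%N) (hs : (n.-1 <= s)%N)
  (hi : (1 <= i <= n)%N) (hadm : s = n.-1 -> (2 <= i)%N)
  (A : 'M[R[i]]_(n, (n + s).-1)) :
  @inK R n s i A -> inZ i A.
Proof.
move=> [[freeA [sxA _]] closA]; have adhA := in_closure_adherent closA.
have le_2nN : ((n.-1).*2 <= (n + s).-1)%N by lia.
split=> //; split; last split=> //.
  apply: submx_trans (coordSpan_sub_xmat _ le_2nN).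
  apply: adherent_flagV_sub_coordSpan adhA => B [cellB YB].
  exact: cell_flagV_sub_coordSpan.
rewrite flagV_pid_mx; apply: adherent_mul_submx freeA _ adhA => B [cellB YB].
by rewrite -flagV_pid_mx; exact: cell_mul_xmat_sub_flagV.
Qed.
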